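(* Let $N\ge 2$, $1\le m\le N$ and $1\le k\le N$ be integers. Consider a uniformly random ranking of $N$ items exactly $m$ of which are relevant, i.e. the set of positions occupied by the relevant items is a uniformly random $m$-element subset of $\{1,\dots,N\}$. For $j=1,\dots,N$ let $I_j\in\{0,1\}$ equal $1$ iff the item at position $j$ is relevant, let $P@i=\frac1i\sum_{j=1}^i I_j$, and let $$AP@k=\frac{1}{\min(m,k)}\sum_{i=1}^k P@i\cdot I_i .$$ Then $$\operatorname{E}(AP@k)=\frac{m}{N\cdot\min(k,m)}\left(\frac{m-1}{N-1}\,k+\frac{N-m}{N-1}\,H_k\right),$$ where $H_k=\sum_{i=1}^k\frac1i$.
   Context: This expectation is called $MAP_{WOR}@k$ in the paper (offline evaluation, sampling without replacement). $H_k$ is the $k$-th harmonic number. *)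

From mathcomp Require Import all_boot all_order all_algebra.
Unset Printing Implicit Defensive.
Import Order.TTheory GRing.Theory Num.Theory.
Local Open Scope ring_scope.

(* Positions 1..N are represented by ordinals 'I_N (position j <-> ordinal j-1).
   A ranking's relevance pattern is the set S of positions of relevant items. *)

Definition relI (R : nzRingType) (N : nat) (S : {set 'I_N}) (j : nat) : R :=
  ((0 < j)%N && [exists x in S, val x == j.-1])%:R.

Definition precAt (R : fieldType) (N : nat) (S : {set 'I_N}) (i : nat) : R :=
  i%:R^-1 * \sum_(1 <= j < i.+1) relI R N S j.

Definition APat (R : fieldType) (N m k : nat) (S : {set 'I_N}) : R :=
  (minn m k)%:R^-1 * \sum_(1 <= i < k.+1) precAt R N S i * relI R N S i.

Definition E_unif (R : fieldType) (N m : nat) (X : {set 'I_N} -> R) : R :=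
  #|[set S : {set 'I_N} | #|S| == m]|%:R^-1 *
  \sum_(S : {set 'I_N} | #|S| == m) X S.

Definition harmonic (R : fieldType) (k : nat) : R := \sum_(1 <= i < k.+1) i%:R^-1.

From mathcomp Require Import all_boot all_order all_algebra zify ring.
Import Order.TTheory GRing.Theory Num.Theory.
Local Open Scope ring_scope.

(* By linearity, E(AP@k) = 1/min(m,k) * sum_(i <= k) 1/i * sum_(j <= i) E(I_j I_i).
   A fixed set of a positions lies in a uniform m-subset of the N positions with
   probability m^_a / N^_a (falling factorials), so E(I_j I_i) is m/N for j = i
   and m(m-1)/(N(N-1)) for j <> i.  Row i thus contributes
   m/N + (i-1) m(m-1)/(N(N-1)), and weighting by 1/i splits the sum over i into
   a multiple of k and a multiple of H_k. *)

Lemma bin_sub_ffact n m a : (a <= m)%N ->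
  ('C(n - a, m - a) * n ^_ a = 'C(n, m) * m ^_ a)%N.
Proof.
elim: a n m => [|a IHa] n m le_am; first by rewrite !subn0 !muln1.
case: m le_am => // m le_am; case: n => [|n]; first by rewrite ffact0n bin0n !muln0.
rewrite !subSS !ffactSS mulnCA IHa // mulnA mul_bin_diag.
by rewrite [in RHS]mulnCA mulnA.
Qed.

Lemma card_draws_supset (T : finType) (A : {set T}) k : (#|A| <= k)%N ->
  #|[set S : {set T} | (#|S| == k) && (A \subset S)]| = 'C(#|T| - #|A|, k - #|A|).
Proof.
move=> leAk; have ->: (#|T| - #|A| = #|~: A|)%N by rewrite -(cardsC A) addKn.
rewrite -cards_draws.
have injD : {in [set S : {set T} | (#|S| == k) && (A \subset S)] &,
             injective (fun S => S :\: A)}.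
  move=> S1 S2 /[!inE] /andP[_ AS1] /andP[_ AS2] eqD.
  by rewrite -(setID S1 A) -(setID S2 A) (setIidPr AS1) (setIidPr AS2) eqD.
rewrite -(card_in_imset injD); apply: eq_card => U; rewrite [RHS]inE.
apply/imsetP/andP => [[S /[!inE] /andP[/eqP cardS AS] ->] | [UAc /eqP cardU]].
  by rewrite subsetDr cardsDS // cardS.
have disjUA : [disjoint U & A] by rewrite disjoints_subset.
exists (A :|: U); last by rewrite setDUl setDv set0U (setDidPl disjUA).
rewrite inE subsetUl andbT cardsU setIC (disjoint_setI0 disjUA) cards0 subn0.
by rewrite cardU subnKC.
Qed.

Lemma sum_harmonic_affine (R : numFieldType) (a b : R) k :
  \sum_(1 <= i < k.+1) i%:R^-1 * (a + b *+ i.-1) = b *+ k + (a - b) * harmonic R k.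
Proof.
rewrite (eq_big_nat _ _ (F2 := fun i => b + (a - b) * i%:R^-1)) => [|i /andP[i_gt0 _]].
  by rewrite big_split sumr_const_nat subn1 -mulr_sumr.
have i_neq0 : i%:R != 0 :> R by rewrite pnatr_eq0 -lt0n.
by rewrite -[b *+ _]mulr_natr -subn1 natrB //; field.
Qed.

Section UniformDraw.

Variables (R : numFieldType) (n m : nat).
Local Notation N := n.+1.
Local Notation E := (E_unif R N m).

Lemma eq_E_unif (X Y : {set 'I_N} -> R) : (forall S, X S = Y S) -> E X = E Y.
Proof. by move=> eqXY; rewrite /E_unif; under eq_bigr do rewrite eqXY. Qed.

Lemma E_unifZ c (X : {set 'I_N} -> R) : E (fun S => c * X S) = c * E X.
Proof. by rewrite /E_unif -mulr_sumr mulrCA. Qed.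

Lemma E_unif_sum (I : Type) (r : seq I) (P : pred I) (F : I -> {set 'I_N} -> R) :
  E (fun S => \sum_(i <- r | P i) F i S) = \sum_(i <- r | P i) E (F i).
Proof. by rewrite /E_unif exchange_big mulr_sumr. Qed.

Hypothesis le_mN : (m <= N)%N.

Lemma E_unif_subset (A : {set 'I_N}) :
  E (fun S => (A \subset S)%:R) = (m ^_ #|A|)%:R / (N ^_ #|A|)%:R.
Proof.
rewrite /E_unif card_draws card_ord.
under eq_bigr do rewrite mulrb.
rewrite -big_mkcondr sumr_const -cardsE.
have [leAm | ltmA] := leqP #|A| m; last first.
  rewrite ffact_small // mul0r eq_card0 ?mulr0 // => S.
  rewrite inE; apply/negP => /andP[/eqP cardS /subset_leq_card].
  by rewrite cardS leqNgt ltmA.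
have binN0 : 'C(N, m)%:R != 0 :> R by rewrite pnatr_eq0 -lt0n bin_gt0.
have ffactN0 : (N ^_ #|A|)%:R != 0 :> R.
  by rewrite pnatr_eq0 -lt0n ffact_gt0 (leq_trans leAm).
rewrite card_draws_supset // card_ord.
apply: (canLR (mulKf binN0)); rewrite mulrA; apply: (canRL (mulfK ffactN0)).
by rewrite -!natrM bin_sub_ffact.
Qed.

Lemma relI_inord S j :
  (0 < j <= N)%N -> relI R N S j = ((inord j.-1 : 'I_N) \in S)%:R.
Proof.
move=> /andP[j_gt0 le_jN]; rewrite /relI j_gt0 /=; congr (nat_of_bool _)%:R.
have ltjN : (j.-1 < N)%N by rewrite prednK.
apply/existsP/idP => [[x /andP[xS /eqP xj]] | jS].
  by suff -> : (inord j.-1 : 'I_N) = x by []; apply/val_inj; rewrite /= inordK -xj.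
by exists (inord j.-1); rewrite jS /= inordK.
Qed.

Local Notation p1 := (m%:R / N%:R : R).
Local Notation p2 := ((m * m.-1)%:R / (N * n)%:R : R).

Lemma E_unif_relIM j i : (0 < j <= N)%N -> (0 < i <= N)%N ->
  E (fun S => relI R N S j * relI R N S i) = if j == i then p1 else p2.
Proof.
move=> jN iN; set a : 'I_N := inord j.-1; set b : 'I_N := inord i.-1.
rewrite (@eq_E_unif _ (fun S => ([set a; b] \subset S)%:R)); last first.
  by move=> S; rewrite !relI_inord // -natrM mulnb subUset !sub1set.
have eq_ab : (a == b) = (j == i).
  apply/eqP/eqP => [/(congr1 val) | eq_ji]; last by rewrite /a /b eq_ji.
  by rewrite /= !inordK ?prednK //; lia.
by rewrite E_unif_subset cards2 eq_ab; case: (j == i); rewrite /= !ffactnS !ffactn0 !muln1.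
Qed.

Lemma sum_E_unif_relIM i : (0 < i <= N)%N ->
  \sum_(1 <= j < i.+1) E (fun S => relI R N S j * relI R N S i) = p1 + p2 *+ i.-1.
Proof.
move=> iN; have /andP[i_gt0 le_iN] := iN.
rewrite big_nat_recr //= E_unif_relIM // eqxx addrC -[i.-1]subn1 -sumr_const_nat.
congr (_ + _); apply: eq_big_nat => j /andP[j_gt0 lt_ji].
have jN : (0 < j <= N)%N by rewrite j_gt0 (leq_trans (ltnW lt_ji)).
by rewrite E_unif_relIM ?ltn_eqF.
Qed.

Lemma E_unif_APat k : (k <= N)%N ->
  E (fun S => APat R N m k S) = (minn m k)%:R^-1 * (p2 *+ k + (p1 - p2) * harmonic R k).
Proof.
move=> le_kN; rewrite /APat E_unifZ E_unif_sum -sum_harmonic_affine; congr (_ * _).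
apply: eq_big_nat => i /andP[i_gt0 le_ik].
rewrite (@eq_E_unif _ (fun S => i%:R^-1 * \sum_(1 <= j < i.+1) relI R N S j * relI R N S i)).
  by rewrite E_unifZ E_unif_sum sum_E_unif_relIM // i_gt0 (leq_trans (ltnSE le_ik)).
by move=> S; rewrite /precAt -mulrA mulr_suml.
Qed.

End UniformDraw.

Theorem theorem1 (R : realFieldType) (N m k : nat) :
  (2 <= N)%N -> (1 <= m <= N)%N -> (1 <= k <= N)%N ->
  E_unif R N m (fun S => APat R N m k S) =
  m%:R / (N%:R * (minn k m)%:R) *
    ((m%:R - 1) / (N%:R - 1) * k%:R + (N%:R - m%:R) / (N%:R - 1) * harmonic R k).
Proof.
case: N => [//|n] lt1N /andP[m_gt0 le_mN] /andP[k_gt0 le_kN].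
rewrite E_unif_APat // minnC.
have n_neq0 : n%:R != 0 :> R by rewrite pnatr_eq0 -lt0n.
have min_neq0 : (minn k m)%:R != 0 :> R by rewrite pnatr_eq0 -lt0n leq_min k_gt0.
rewrite -[m.-1]subn1 !natrM natrB // -[_ *+ k]mulr_natr -[n.+1%:R]natr1 addrK.
by field; rewrite n_neq0 min_neq0 natr1 pnatr_eq0.
Qed.
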